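(* Fix integers $\tau_1\ge\tau_2\ge 1$. For each integer $n>\tau_1$ let $\mathcal{E}^{(n)}\subseteq\mathbb{R}^2$ be the set of all pairs $$\Big(\mathsf{E}^{(n)}_r,\mathsf{E}^{(n)}_d\Big)=\left(\frac{\log(n\bar\alpha-\bar M)}{\log n},\ \frac{\log \bar M}{\log n}\right)$$ such that $(\bar\alpha,\bar M)$ is achievable for $(n,k,d)=(n,n-\tau_1,n-\tau_2)$ exact-repair regenerating (with $n\bar\alpha-\bar M>0$ and $\bar M>0$). Let $\mathcal{E}$ be the closure of $\limsup_{n\to\infty}\mathcal{E}^{(n)}$, and let $$\mathcal{E}^*=\{(\mathsf{E}_r,\mathsf{E}_d)\in\mathbb{R}^2:\ \mathsf{E}_d\le \mathsf{E}_r+1,\ \ 2\mathsf{E}_d\le 2+\mathsf{E}_r,\ \ \mathsf{E}_d\le 2\}.$$ Then $\mathcal{E}^*=\mathcal{E}$.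
   Context: Write $I_m=\{1,\dots,m\}$. For integers $n,k,d$ with $1\le k\le d\le n-1$, an $(n,k,d,N,N_d,K)$ exact-repair regenerating code consists of encoding functions $f^E_i:I_N\to I_{N_d}$ ($i\in I_n$; node $i$ stores $f^E_i(m)$ for the message $m\in I_N$); for every $A\subseteq I_n$ with $|A|=k$ a decoding function $f^D_A:I_{N_d}^k\to I_N$ with $f^D_A((f^E_i(m))_{i\in A})=m$ for all $m$; and for every $j\in I_n$, every $A\subseteq I_n\setminus\{j\}$ with $|A|=d$ and every $i\in A$ a repair encoding function $F^E_{i,A,j}:I_{N_d}\to I_K$, together with a repair decoding function $F^D_{j,A}:I_K^d\to I_{N_d}$ such that $F^D_{j,A}((F^E_{i,A,j}(f^E_i(m)))_{i\in A})=f^E_j(m)$ for all $m$. A pair $(\bar\alpha,\bar M)$ of reals is achievable for $(n,k,d)$ if for every $\epsilon>0$ there is an $(n,k,d,N,N_d,K)$ exact-repair regenerating code with $\bar\alpha+\epsilon\ge \log N_d/\log K$ and $\bar M-\epsilon\le \log N/\log K$. The limit superior of a sequence of subsets of $\mathbb{R}^2$ is understood as the set of all points that are limits of sequences $x_j\in\mathcal{E}^{(n_j)}$ with $n_j\to\infty$. *)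

From mathcomp Require Import all_boot.
From Stdlib Require Import Reals.

Set Implicit Arguments.
Unset Strict Implicit.
Unset Printing Implicit Defensive.

(* The paper's I_m = {1,..,m} is modelled by the ordinal type 'I_m = {0,..,m-1}
   (same cardinality).  Nodes are 'I_n. *)

(* The tuple (g i)_{i in A}, encoded as a finite function that is [None]
   outside A. *)
Definition restrict (T : Type) (n : nat) (A : {set 'I_n}) (g : 'I_n -> T)
  : {ffun 'I_n -> option T} :=
  [ffun i => if i \in A then Some (g i) else None].

(* Existence of an (n,k,d,N,N_d,K) exact-repair regenerating code.
   fE i      : encoding function of node i          (I_N -> I_{N_d})
   fD A      : decoding function for the k-set A     (I_{N_d}^A -> I_N)
   FE i A j  : repair encoding function F^E_{i,A,j}  (I_{N_d} -> I_K)
   FD j A    : repair decoding function F^D_{j,A}    (I_K^A -> I_{N_d}) *)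
Definition ER_code (n k d N Nd K : nat) : Prop :=
  exists (fE : 'I_n -> 'I_N -> 'I_Nd)
         (fD : {set 'I_n} -> {ffun 'I_n -> option 'I_Nd} -> 'I_N)
         (FE : 'I_n -> {set 'I_n} -> 'I_n -> 'I_Nd -> 'I_K)
         (FD : 'I_n -> {set 'I_n} -> {ffun 'I_n -> option 'I_K} -> 'I_Nd),
    (forall (A : {set 'I_n}), #|A| = k ->
       forall m : 'I_N, fD A (restrict A (fun i => fE i m)) = m) /\
    (forall (j : 'I_n) (A : {set 'I_n}), j \notin A -> #|A| = d ->
       forall m : 'I_N,
         FD j A (restrict A (fun i => FE i A j (fE i m))) = fE j m).

Local Open Scope R_scope.

Definition achievable (n k d : nat) (abar Mbar : R) : Prop :=
  forall eps : R, eps > 0 ->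
    exists N Nd K : nat, ER_code n k d N Nd K /\
      abar + eps >= ln (INR Nd) / ln (INR K) /\
      Mbar - eps <= ln (INR N) / ln (INR K).

Definition En (tau1 tau2 n : nat) (p : R * R) : Prop :=
  exists abar Mbar : R,
    achievable n (n - tau1) (n - tau2) abar Mbar /\
    INR n * abar - Mbar > 0 /\ Mbar > 0 /\
    p = (ln (INR n * abar - Mbar) / ln (INR n), ln Mbar / ln (INR n)).

(* limsup_{n -> oo} E^(n): limits of x_j in E^(n_j) with n_j -> oo
   (and n_j > tau1, the range where E^(n) is defined). *)
Definition limsupE (tau1 tau2 : nat) (p : R * R) : Prop :=
  exists (nj : nat -> nat) (x : nat -> R * R),
    (forall j, ltn tau1 (nj j)) /\
    (forall j, En tau1 tau2 (nj j) (x j)) /\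
    (forall B : nat, exists J : nat, forall j, leq J j -> leq B (nj j)) /\
    Un_cv (fun j => fst (x j)) (fst p) /\
    Un_cv (fun j => snd (x j)) (snd p).

Definition closure2 (S : R * R -> Prop) (p : R * R) : Prop :=
  forall eps : R, eps > 0 ->
    exists q, S q /\ Rabs (fst q - fst p) < eps /\ Rabs (snd q - snd p) < eps.

Definition Estar (p : R * R) : Prop :=
  snd p <= fst p + 1 /\ 2 * snd p <= 2 + fst p /\ snd p <= 2.

(* Reading the full contents of t <= k nodes and repairing k - t
   further nodes, each from the first t nodes and d - t + 1 common helpers,
   determines the message; hence Mbar <= t abar + (k - t) (d - t + 1).  The cuts
   t = k, t = 0 and k - t close to abar / 2 give Mbar <= n (n abar - Mbar),
   Mbar <= n^2 and Mbar^2 <= 16 (tau1 - tau2 + 1) n^2 (n abar - Mbar); after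
   taking logarithms in base n these are the three inequalities of E*, the last
   one up to an O(1 / log n) error that vanishes in the limit.

   In the layered code every r-subset of nodes carries its own
   Reed-Solomon codeword of dimension r - tau1 over F_p; in units of
   C(n-2, r-2) it stores abar = C(n-1, r-1) and Mbar = (r - tau1) C(n, r), and
   running many copies in parallel over a larger repair alphabet scales both by
   any smaller rational factor.  With r about n^g for b - a < g < min(1, 2 - b)
   this puts every interior point (a, b) of E* in E^(n) for all large n, and
   E* is the closure of its interior. *)

Set Warnings "-notation-overridden -ambiguous-paths".
From Stdlib Require Import Reals Lra Lia ZArith.
From mathcomp Require Import all_boot all_algebra zify.
Set Implicit Arguments.
Unset Strict Implicit.
Unset Printing Implicit Defensive.

Definition set_index (T : finType) (X : {set T}) (m : nat) (x : T) : 'I_m.+1 :=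
  inord (index x (enum X)).

Lemma set_index_inj (T : finType) (X : {set T}) m :
  #|X| <= m.+1 -> {in X &, injective (set_index X m)}.
Proof.
move=> cardX x y xX yX /(congr1 val); rewrite /set_index.
have size_enum : size (enum X) <= m.+1 by rewrite -cardE.
have ix : index x (enum X) < size (enum X) by rewrite index_mem mem_enum.
have iy : index y (enum X) < size (enum X) by rewrite index_mem mem_enum.
rewrite /= (inordK (leq_trans ix size_enum)) (inordK (leq_trans iy size_enum)).
by move/(congr1 (nth x (enum X))); rewrite !nth_index ?mem_enum.
Qed.

Lemma restrictE (T : Type) n (A : {set 'I_n}) (g : 'I_n -> T) i :
  restrict A g i = if i \in A then Some (g i) else None.
Proof. by rewrite ffunE. Qed.

Lemma eq_in_restrict (T : Type) n (A : {set 'I_n}) (g h : 'I_n -> T) :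
  (forall i, i \in A -> g i = h i) <-> restrict A g = restrict A h.
Proof.
split=> [eq_gh | /ffunP eq_gh i iA].
  by apply/ffunP=> i; rewrite !restrictE; case: ifP => // /eq_gh ->.
by have := eq_gh i; rewrite !restrictE iA => -[].
Qed.

Lemma restrict_pffun_on (T : finType) n (A : {set 'I_n}) (g : 'I_n -> T) :
  restrict A g \in pffun_on None A (codom (@Some T)).
Proof.
apply/pffun_onP; split.
  by apply/subsetP=> x; rewrite inE restrictE; case: ifP.
move=> y /mapP [x]; rewrite mem_enum => xA ->.
by rewrite restrictE xA codom_f.
Qed.

Lemma card_codom_Some (T : finType) : #|codom (@Some T)| = #|T|.
Proof. by apply: card_codom => x y []. Qed.

Lemma card_ord_interval n a b : a <= b <= n -> #|[set i : 'I_n | a <= i < b]| = b - a.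
Proof.
case/andP=> ab bn.
rewrite cardsE cardE /enum_mem -enumT /= size_filter.
rewrite (_ : count _ _ = count (fun x => a <= x < b) (iota 0 n)); last first.
  by rewrite -(val_enum_ord n) count_map.
rewrite -(subnKC bn) -(subnKC ab) !iotaD !count_cat /= add0n.
rewrite (@eq_in_count _ _ pred0) ?count_pred0; last first.
  by move=> x; rewrite mem_iota add0n => /andP [_ xa] /=; rewrite leqNgt xa.
rewrite (@eq_in_count _ _ predT (iota _ (b - a))) ?count_predT ?size_iota; last first.
  by move=> x; rewrite mem_iota subnKC // => /andP [-> ->].
rewrite (@eq_in_count _ _ pred0 (iota _ _)) ?count_pred0 ?addn0; last first.
  move=> x; rewrite mem_iota subnKC // subnKC // => /andP [bx _] /=.
  by rewrite ltnNge bx andbF.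
by rewrite add0n addKn.
Qed.

(* Injective storage and repair maps on arbitrary finite types give an ER_code
   once the values actually taken are numbered. *)
Section CodeOfInjective.
Variables (n k d Nd K : nat) (Msg Sto Sym : finType) (m0 : Msg).
Variables (fE : 'I_n -> Msg -> Sto) (FE : 'I_n -> {set 'I_n} -> 'I_n -> Sto -> Sym).
Hypothesis decodable : forall A : {set 'I_n}, #|A| = k -> forall m1 m2,
  (forall i, i \in A -> fE i m1 = fE i m2) -> m1 = m2.
Hypothesis repairable : forall j (A : {set 'I_n}), j \notin A -> #|A| = d ->
  forall m1 m2, (forall i, i \in A -> FE i A j (fE i m1) = FE i A j (fE i m2)) ->
  fE j m1 = fE j m2.
Hypothesis card_stored : forall i, #|[set fE i m | m in Msg]| <= Nd.+1.
Hypothesis card_sent : forall i (A : {set 'I_n}) j, i \in A -> j \notin A ->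
  #|[set FE i A j (fE i m) | m in Msg]| <= K.+1.

Let stored i := [set fE i m | m in Msg].
Let sent i A j := [set FE i A j (fE i m) | m in Msg].
Let store i (u : 'I_#|Msg|) : 'I_Nd.+1 := set_index (stored i) Nd (fE i (enum_val u)).
Let unstore i (x : 'I_Nd.+1) : Sto :=
  odflt (fE i m0) [pick s in stored i | set_index (stored i) Nd s == x].
Let send i A j (x : 'I_Nd.+1) : 'I_K.+1 := set_index (sent i A j) K (FE i A j (unstore i x)).

Lemma unstoreK i u : unstore i (store i u) = fE i (enum_val u).
Proof.
rewrite /unstore; case: pickP => [s /andP [sS /eqP eq_s] | none] /=.
  by apply: (set_index_inj (card_stored i)) => //; apply: imset_f.
by have := none (fE i (enum_val u)); rewrite imset_f // eqxx.
Qed.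

Lemma store_inj i u1 u2 : store i u1 = store i u2 -> fE i (enum_val u1) = fE i (enum_val u2).
Proof. by apply: (set_index_inj (card_stored i)); apply: imset_f. Qed.

Lemma send_inj i (A : {set 'I_n}) j u1 u2 : i \in A -> j \notin A ->
  send i A j (store i u1) = send i A j (store i u2) ->
  FE i A j (fE i (enum_val u1)) = FE i A j (fE i (enum_val u2)).
Proof.
move=> iA jA; rewrite /send !unstoreK.
by apply: (set_index_inj (card_sent iA jA)); apply: imset_f.
Qed.

Lemma ER_code_of_injective : ER_code n k d #|Msg| Nd.+1 K.+1.
Proof.
pose fD A y := odflt (enum_rank m0) [pick u | restrict A (fun i => store i u) == y].
pose FD j A y :=
  store j (odflt (enum_rank m0) [pick u | restrict A (fun i => send i A j (store i u)) == y]).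
exists store, fD, send, FD; split.
  move=> A cardA u; rewrite /fD; case: pickP => [u' /eqP eq_u | /(_ u)]; last by rewrite eqxx.
  apply: enum_val_inj; apply: (decodable cardA) => i iA.
  by apply: store_inj; move/eq_in_restrict: eq_u; apply.
move=> j A jA cardA u; rewrite /FD; case: pickP => [u' /eqP eq_u | /(_ u)]; last by rewrite eqxx.
suff : fE j (enum_val u') = fE j (enum_val u) by rewrite /store => ->.
apply: (repairable jA cardA) => i iA.
by apply: send_inj => //; move/eq_in_restrict: eq_u; apply.
Qed.

End CodeOfInjective.

Section CutSetBound.
Variables (n k d N Nd K t : nat).
Variables (fE : 'I_n -> 'I_N -> 'I_Nd)
  (fD : {set 'I_n} -> {ffun 'I_n -> option 'I_Nd} -> 'I_N)
  (FE : 'I_n -> {set 'I_n} -> 'I_n -> 'I_Nd -> 'I_K)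
  (FD : 'I_n -> {set 'I_n} -> {ffun 'I_n -> option 'I_K} -> 'I_Nd).
Hypothesis decode : forall A : {set 'I_n}, #|A| = k ->
  forall m, fD A (restrict A (fun i => fE i m)) = m.
Hypothesis repair : forall j (A : {set 'I_n}), j \notin A -> #|A| = d ->
  forall m, FD j A (restrict A (fun i => FE i A j (fE i m))) = fE j m.
Hypotheses (kd : k <= d) (dn : d < n) (tk : t <= k).

Let read := [set i : 'I_n | 0 <= i < t].
Let repaired := [set i : 'I_n | t <= i < k].
Let helpers := [set i : 'I_n | t <= i < d.+1].
Let helper_set i := [set h : 'I_n | 0 <= h < d.+1] :\ i.

Let cut (m : 'I_N) :=
  (restrict read (fun i => fE i m),
   [ffun j => if j \in repaired then restrict helpers (fun h => FE h (helper_set j) j (fE h m))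
              else [ffun _ => None]]).

Let card_helper_set (i : 'I_n) : i < d.+1 -> #|helper_set i| = d.
Proof.
move=> id; have := cardsD1 i [set h : 'I_n | 0 <= h < d.+1].
by rewrite card_ord_interval ?subn0 // inE id add1n => -[].
Qed.

(* The nodes of [repaired] are repaired one by one from [read] and [helpers],
   after which the first k nodes decode the message. *)
Lemma cut_inj : injective cut.
Proof.
move=> m1 m2 [/eq_in_restrict eq_read /ffunP eq_sent].
have eq_prefix (i : 'I_n) : i < k -> fE i m1 = fE i m2.
  move=> ik; case: (ltnP i t) => [it | ti]; first by apply: eq_read; rewrite inE.
  have iH : i \notin helper_set i by rewrite !inE eqxx.
  have cardH : #|helper_set i| = d by apply: card_helper_set; rewrite ltnS (leq_trans (ltnW ik)).
  rewrite -(repair iH cardH m1) -(repair iH cardH m2); congr (FD i _).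
  apply/eq_in_restrict => h hH; case: (ltnP h t) => [ht | th].
    by rewrite eq_read // inE.
  have := eq_sent i; rewrite !ffunE inE ti ik => /eq_in_restrict; apply.
  by move: hH; rewrite !inE th => /andP [].
have cardA : #|[set i : 'I_n | 0 <= i < k]| = k.
  by rewrite card_ord_interval ?subn0 // (leq_trans kd) // ltnW.
rewrite -(decode cardA m1) -(decode cardA m2); congr (fD _).
by apply/eq_in_restrict => i; rewrite inE => /eq_prefix.
Qed.

Lemma cutset_bound : N <= Nd ^ t * K ^ ((k - t) * (d - t + 1)).
Proof.
pose sent := pffun_on None helpers (codom (@Some 'I_K)).
have card_read : #|read| = t.
  by rewrite card_ord_interval ?subn0 // (leq_trans tk) // (leq_trans kd) // ltnW.
have card_repaired : #|repaired| = k - t.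
  by rewrite card_ord_interval // tk (leq_trans kd) // ltnW.
have card_helpers : #|helpers| = d - t + 1.
  have td := leq_trans tk kd.
  by rewrite card_ord_interval ?addn1 ?subSn // dn (leq_trans td).
have : #|[set cut m | m in 'I_N]| <=
       #|setX [set x in pffun_on None read (codom (@Some 'I_Nd))]
              [set x in pffun_on [ffun _ => None] repaired sent]|.
  apply: subset_leq_card; apply/subsetP => x /imsetP [m _ ->].
  rewrite in_setX !in_set /= restrict_pffun_on; apply/pffun_onP; split.
    by apply/subsetP => i; rewrite inE ffunE; case: ifP => //; rewrite eqxx.
  by move=> y /mapP [i]; rewrite mem_enum => iR ->; rewrite ffunE iR restrict_pffun_on.
rewrite card_imset; last exact: cut_inj.
rewrite card_ord cardsX !cardsE !card_pffun_on !card_codom_Some !card_ord.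
by rewrite card_read card_repaired card_helpers -expnM (mulnC (d - t + 1)).
Qed.

End CutSetBound.

Lemma ER_code_cutset_bound n k d N Nd K t : ER_code n k d N Nd K ->
  k <= d -> d < n -> t <= k -> N <= Nd ^ t * K ^ ((k - t) * (d - t + 1)).
Proof. by move=> [fE [fD [FE [FD [decode repair]]]]]; exact: (cutset_bound decode repair). Qed.

(* Layer S (an r-subset of the nodes) carries a Reed-Solomon codeword of length
   r and dimension r - t1 over F_p, evaluated at the points of S; node i stores
   its symbols in all layers through i, and a helper i repairing j sends its
   symbols in the layers through both i and j. *)
Module LayeredCode.
Import GRing.Theory.

Section Layered.
Variables (n t1 t2 r p : nat).
Hypotheses (t21 : t2 <= t1) (t1r : t1 < r) (rn : r <= n) (p_prime : prime p) (np : n < p).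
Local Open Scope ring_scope.

Definition layer := {S : {set 'I_n} | #|S| == r}.
Definition message := {ffun layer -> (r - t1).-tuple 'F_p}.
Definition node_point (i : 'I_n) : 'F_p := (val i)%:R.

Lemma node_point_inj : injective node_point.
Proof.
move=> i j /(congr1 val); rewrite /= !val_Fp_nat // !modn_small; first exact: val_inj.
- exact: ltn_trans (ltn_ord j) np.
- exact: ltn_trans (ltn_ord i) np.
Qed.

Lemma eq_Poly_tuple_on m (c1 c2 : m.-tuple 'F_p) (B : {set 'I_n}) : (m <= #|B|)%N ->
  (forall i, i \in B -> (Poly c1).[node_point i] = (Poly c2).[node_point i]) -> c1 = c2.
Proof.
move=> mB eqB; have [eq0 | neq0] := eqVneq (Poly c1 - Poly c2) 0.
  have eq_Poly : Poly c1 = Poly c2 by apply/eqP; rewrite -subr_eq0 eq0.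
  apply: val_inj; apply: (@eq_from_nth _ 0); first by rewrite !size_tuple.
  by move=> i _; have := congr1 (fun q : {poly 'F_p} => q`_i) eq_Poly; rewrite !coef_Poly.
have size_diff : (size (Poly c1 - Poly c2)%R <= m)%N.
  apply: leq_trans (size_polyD _ _) _; rewrite geq_max size_polyN.
  by rewrite !(leq_trans (size_Poly _)) // size_tuple.
have roots : all (root (Poly c1 - Poly c2)) (map node_point (enum B)).
  apply/allP => x /mapP [i]; rewrite mem_enum => iB ->.
  by rewrite /root hornerD hornerN eqB // subrr.
have distinct : uniq (map node_point (enum B)).
  by rewrite map_inj_uniq ?enum_uniq //; apply: node_point_inj.
have := max_poly_roots neq0 roots distinct; rewrite size_map -cardE => lt_B.
by have := leq_trans lt_B (leq_trans size_diff mB); rewrite ltnn.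
Qed.

Lemma card_setI_large (S A : {set 'I_n}) c : #|A| = (n - c)%N -> (c <= n)%N ->
  (#|S| - c <= #|S :&: A|)%N.
Proof.
move=> cardA cn; rewrite -(cardsID A S) leq_subLR addnC leq_add2r.
apply: leq_trans (subset_leq_card (_ : S :\: A \subset ~: A)) _.
  by apply/subsetP => x; rewrite !inE => /andP [].
by have := cardsC A; rewrite cardA card_ord; lia.
Qed.

Definition layer_store (i : 'I_n) (m : message) : {ffun layer -> 'F_p} :=
  [ffun S : layer => if i \in val S then (Poly (m S)).[node_point i] else 0].
Definition layer_send (i : 'I_n) (A : {set 'I_n}) (j : 'I_n) (s : {ffun layer -> 'F_p}) :
  {ffun layer -> 'F_p} := [ffun S : layer => if j \in val S then s S else 0].

Lemma layer_decodable (A : {set 'I_n}) : #|A| = (n - t1)%N -> forall m1 m2,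
  (forall i, i \in A -> layer_store i m1 = layer_store i m2) -> m1 = m2.
Proof.
move=> cardA m1 m2 eqA; apply/ffunP => S.
apply: (@eq_Poly_tuple_on _ _ _ (val S :&: A)).
  have := card_setI_large (val S) cardA (leq_trans (ltnW t1r) rn).
  by rewrite (eqP (valP S)).
move=> i; rewrite inE => /andP [iS iA].
by have /ffunP/(_ S) := eqA i iA; rewrite !ffunE iS.
Qed.

Lemma layer_repairable j (A : {set 'I_n}) : j \notin A -> #|A| = (n - t2)%N ->
  forall m1 m2, (forall i, i \in A ->
    layer_send i A j (layer_store i m1) = layer_send i A j (layer_store i m2)) ->
  layer_store j m1 = layer_store j m2.
Proof.
move=> jA cardA m1 m2 eqA; apply/ffunP => S; rewrite !ffunE.
case: ifP => // jS; congr (_.[_]); congr Poly; congr tval.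
apply: (@eq_Poly_tuple_on _ _ _ (val S :&: A)).
  have := card_setI_large (val S) cardA (leq_trans (leq_trans t21 (ltnW t1r)) rn).
  by rewrite (eqP (valP S)); apply: leq_trans; apply: leq_sub2l.
move=> i; rewrite inE => /andP [iS iA].
by have /ffunP/(_ S) := eqA i iA; rewrite !ffunE jS iS.
Qed.

Lemma card_layers_through i : (#|[set S : layer | i \in val S]| <= 'C(n.-1, r.-1))%N.
Proof.
pose f (S : layer) := val S :\ i.
rewrite -(card_in_imset (f := f)); last first.
  move=> S1 S2; rewrite !inE => iS1 iS2 eq_f; apply: val_inj.
  by rewrite -(setD1K iS1) -(setD1K iS2) /f in eq_f *; rewrite eq_f.
have -> : n.-1 = #|[set~ i]| by rewrite cardsC1 card_ord.
rewrite -cards_draws; apply: subset_leq_card; apply/subsetP => T /imsetP [S].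
rewrite inE => iS ->; rewrite inE; apply/andP; split.
  by apply/subsetP => x; rewrite !inE => /andP [].
by have := cardsD1 i (val S); rewrite iS (eqP (valP S)) add1n => ->.
Qed.

Lemma card_layers_through2 i j : i != j ->
  (#|[set S : layer | (i \in val S) && (j \in val S)]| <= 'C(n.-2, r.-2))%N.
Proof.
move=> ij; pose f (S : layer) := val S :\ i :\ j.
rewrite -(card_in_imset (f := f)); last first.
  move=> S1 S2; rewrite !inE => /andP [iS1 jS1] /andP [iS2 jS2] eq_f; apply: val_inj.
  have jS1' : j \in val S1 :\ i by rewrite !inE eq_sym ij.
  have jS2' : j \in val S2 :\ i by rewrite !inE eq_sym ij.
  by rewrite -(setD1K iS1) -(setD1K iS2) -(setD1K jS1') -(setD1K jS2') /f in eq_f *; rewrite eq_f.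
have -> : n.-2 = #|[set~ i] :\ j|.
  have := cardsD1 j [set~ i]; rewrite !inE eq_sym ij cardsC1 card_ord add1n.
  by move=> e; rewrite -[n.-2]/(n.-1.-1) e.
rewrite -cards_draws; apply: subset_leq_card; apply/subsetP => T /imsetP [S].
rewrite inE => /andP [iS jS] ->; rewrite inE; apply/andP; split.
  by apply/subsetP => x; rewrite !inE => /and3P [-> ->].
have jS' : j \in val S :\ i by rewrite !inE eq_sym ij.
have := cardsD1 j (val S :\ i); rewrite jS' add1n => e.
by have := cardsD1 i (val S); rewrite iS (eqP (valP S)) add1n e => ->.
Qed.

Lemma card_message : #|{: message}| = (p ^ ((r - t1) * 'C(n, r)))%N.
Proof.
rewrite card_ffun card_tuple card_Fp // card_sig -expnM; congr (_ ^ (_ * _))%N.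
rewrite -[n in 'C(n, _)](card_ord n) -card_draws cardsE.
by apply: eq_card => S; rewrite !inE.
Qed.

Lemma card_supported (D : {set layer}) (X : {set {ffun layer -> 'F_p}}) :
  X \subset [set x in pffun_on 0 D [set: 'F_p]] -> (#|X| <= p ^ #|D|)%N.
Proof.
move=> sX; apply: leq_trans (subset_leq_card sX) _.
by rewrite cardsE card_pffun_on cardsT card_Fp.
Qed.

Lemma layered_ER_code : ER_code n (n - t1) (n - t2) (p ^ ((r - t1) * 'C(n, r)))
  (p ^ 'C(n.-1, r.-1)) (p ^ 'C(n.-2, r.-2)).
Proof.
have p0 : (0 < p)%N by apply: prime_gt0.
have /prednK eNd : (0 < p ^ 'C(n.-1, r.-1))%N by rewrite expn_gt0 p0.
have /prednK eK : (0 < p ^ 'C(n.-2, r.-2))%N by rewrite expn_gt0 p0.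
rewrite -card_message -eNd -eK.
apply: (@ER_code_of_injective _ _ _ _ _ _ _ _ [ffun _ => [tuple of nseq (r - t1) 0]]
  layer_store layer_send).
- exact: layer_decodable.
- exact: layer_repairable.
- move=> i; rewrite eNd; apply: leq_trans (card_supported _) _; last first.
    by apply: leq_pexp2l => //; apply: card_layers_through.
  apply/subsetP => x /imsetP [m _ ->]; rewrite inE; apply/pffun_onP.
  split; last by move=> y _; rewrite inE.
  by apply/subsetP => S; rewrite !inE ffunE; case: ifP => //; rewrite eqxx.
- move=> i A j iA jA; rewrite eK.
  apply: leq_trans (card_supported (D := [set S : layer | (i \in val S) && (j \in val S)]) _) _;
    last first.
    apply: leq_pexp2l => //; apply: card_layers_through2.
    by apply: contraNneq jA => <-.
  apply/subsetP => x /imsetP [m _ ->]; rewrite inE; apply/pffun_onP.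
  split; last by move=> y _; rewrite inE.
  apply/subsetP => S; rewrite !inE !ffunE.
  by case: (j \in val S); case: (i \in val S); rewrite ?eqxx.
Qed.

End Layered.
End LayeredCode.

Lemma ER_code_pow n k d N Nd K v Nd' K' : ER_code n k d N Nd K -> 0 < N ->
  Nd ^ v <= Nd'.+1 -> K ^ v <= K'.+1 -> ER_code n k d (N ^ v) Nd'.+1 K'.+1.
Proof.
move=> [fE [fD [FE [FD [decode repair]]]]] N0 cardNd cardK.
have -> : N ^ v = #|{ffun 'I_v -> 'I_N}| by rewrite card_ffun !card_ord.
pose store i (m : {ffun 'I_v -> 'I_N}) : {ffun 'I_v -> 'I_Nd} := [ffun u => fE i (m u)].
pose send i A j (s : {ffun 'I_v -> 'I_Nd}) : {ffun 'I_v -> 'I_K} := [ffun u => FE i A j (s u)].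
apply: (@ER_code_of_injective _ _ _ _ _ _ _ _ [ffun _ => Ordinal N0] store send).
- move=> A cardA m1 m2 eqA; apply/ffunP => u.
  rewrite -(decode _ cardA (m1 u)) -(decode _ cardA (m2 u)); congr (fD A).
  by apply/eq_in_restrict => i /eqA /ffunP /(_ u); rewrite !ffunE.
- move=> j A jA cardA m1 m2 eqA; apply/ffunP => u; rewrite !ffunE.
  rewrite -(repair _ _ jA cardA (m1 u)) -(repair _ _ jA cardA (m2 u)); congr (FD j A).
  by apply/eq_in_restrict => i /eqA /ffunP /(_ u); rewrite !ffunE.
- by move=> i; apply: leq_trans (max_card _) _; rewrite card_ffun !card_ord.
- by move=> i A j _ _; apply: leq_trans (max_card _) _; rewrite card_ffun !card_ord.
Qed.

Local Open Scope R_scope.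

Lemma INR_muln a b : INR (a * b) = INR a * INR b.
Proof. by rewrite mulnE mult_INR. Qed.

Lemma INR_addn a b : INR (a + b) = INR a + INR b.
Proof. by rewrite addnE plus_INR. Qed.

Lemma INR_subn a b : (b <= a)%N -> INR (a - b) = INR a - INR b.
Proof. by move=> ba; rewrite subnE minus_INR //; apply/leP. Qed.

Lemma INR_pred m : (0 < m)%N -> INR m.-1 = INR m - 1.
Proof. by move=> m0; rewrite -subn1 INR_subn. Qed.

Lemma INR_expn a e : INR (a ^ e) = INR a ^ e.
Proof. by elim: e => // e IH; rewrite expnS INR_muln IH. Qed.

Lemma lt_0_INR_nat m : (0 < m)%N -> 0 < INR m.
Proof. by move=> m0; apply: lt_0_INR; apply/ltP. Qed.

Lemma exists_nat_floor x : 0 <= x -> exists s : nat, INR s <= x < INR s + 1.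
Proof.
move=> x0; have [up_gt up_le] := archimed x.
have up0 : Z.lt 0 (up x) by apply: lt_0_IZR; lra.
exists (Z.to_nat (up x - 1)).
rewrite INR_IZR_INZ Z2Nat.id; last lia.
rewrite minus_IZR /=; lra.
Qed.

Lemma ln_le x y : 0 < x -> x <= y -> ln x <= ln y.
Proof.
move=> x0 /Rle_lt_or_eq_dec [xy | <-]; last exact: Rle_refl.
by apply: Rlt_le; apply: ln_increasing.
Qed.

Lemma ln_nonpos x : x <= 0 -> ln x = 0.
Proof. by move=> x0; rewrite /ln; destruct (Rlt_dec 0 x); first exfalso; lra. Qed.

Lemma ln_INR_ge0 m : 0 <= ln (INR m).
Proof.
case: m => [|m]; first by rewrite ln_nonpos /=; lra.
by rewrite -ln_1; apply: ln_le; rewrite ?S_INR; have := pos_INR m; lra.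
Qed.

Lemma ln_INR_gt0 m : (1 < m)%N -> 0 < ln (INR m).
Proof.
move=> /ltP /lt_INR /= m1; rewrite -ln_1; apply: ln_increasing; lra.
Qed.

Lemma ln_ratio_le (N Nd K t c : nat) : ((0 < N) -> (0 < Nd))%N -> (N <= Nd ^ t * K ^ c)%N ->
  ln (INR N) / ln (INR K) <= INR t * (ln (INR Nd) / ln (INR K)) + INR c.
Proof.
move=> Nd0 NK; have [K1 | K1] := leqP K 1.
  have -> : ln (INR K) = 0.
    by case: (K) K1 => [|[|]] // _; rewrite ?ln_1 // ln_nonpos /=; lra.
  by rewrite /Rdiv Rinv_0 !Rmult_0_r Rplus_0_l; apply: pos_INR.
have lnK := ln_INR_gt0 K1.
have ratio0 : 0 <= ln (INR Nd) / ln (INR K).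
  by apply: Rmult_le_pos; [apply: ln_INR_ge0 | apply/Rlt_le/Rinv_0_lt_compat].
case: N Nd0 NK => [|N] Nd0 NK.
  rewrite ln_nonpos /= /Rdiv ?Rmult_0_l; last lra.
  by have := pos_INR t; have := pos_INR c; nra.
have lnN : ln (INR N.+1) <= INR t * ln (INR Nd) + INR c * ln (INR K).
  have Ndp := lt_0_INR_nat (Nd0 isT).
  have Kp : 0 < INR K by apply: lt_0_INR_nat; lia.
  rewrite -!ln_pow // -ln_mult; try exact: pow_lt.
  rewrite -!INR_expn -INR_muln.
  by apply: ln_le; [apply: lt_0_INR_nat | apply: le_INR; apply/leP].
have divK x : x / ln (INR K) * ln (INR K) = x by field; lra.
apply: (Rmult_le_reg_r (ln (INR K))) => //.
by rewrite Rmult_plus_distr_r Rmult_assoc !divK.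
Qed.

Lemma code_ratio_bound n k d N Nd K t : ER_code n k d N Nd K ->
  (k <= d)%N -> (d < n)%N -> (t <= k)%N ->
  ln (INR N) / ln (INR K) <= INR t * (ln (INR Nd) / ln (INR K)) + INR ((k - t) * (d - t + 1)).
Proof.
move=> code kd dn tk; have bound := ER_code_cutset_bound code kd dn tk.
apply: ln_ratio_le bound => N0; case: code => fE _.
exact: leq_ltn_trans (leq0n _) (ltn_ord (fE (Ordinal (leq_ltn_trans (leq0n _) dn)) (Ordinal N0))).
Qed.

Lemma achievable_cutset_bound n k d a M t : achievable n k d a M ->
  (k <= d)%N -> (d < n)%N -> (t <= k)%N -> M <= INR t * a + INR ((k - t) * (d - t + 1)).
Proof.
move=> ach kd dn tk; apply: Rle_plus_epsilon => e e0.
have t0 := pos_INR t; set c := INR ((k - t) * (d - t + 1)).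
have e_t : 0 < e / (INR t + 1) by apply: Rdiv_lt_0_compat; lra.
have [N [Nd [K [code [alpha_le M_le]]]]] := ach _ e_t.
have := code_ratio_bound code kd dn tk; rewrite -/c => ratio.
have split_e : INR t * (e / (INR t + 1)) + e / (INR t + 1) = e by field; lra.
by nra.
Qed.

(* [cut s] is the cut-set bound with [s = k - t] repaired nodes, written with
   [T = d - k + 1]. *)
Section CutSetConsequences.
Variables (k : nat) (n T a M : R).
Hypotheses (T1 : 1 <= T) (kTn : INR k + T <= n) (M0 : 0 < M) (R0 : 0 < n * a - M).
Hypothesis cut : forall s : nat, (s <= k)%N -> M <= (INR k - INR s) * a + INR s * (INR s + T).

Let M_le_ka : M <= INR k * a.
Proof. by have := cut (leq0n k); have := pos_INR k; rewrite /=; lra. Qed.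
Let a0 : 0 < a.
Proof. by have := M_le_ka; have := pos_INR k; nra. Qed.
Let a_le_R : a <= n * a - M.
Proof. by have := M_le_ka; have := pos_INR k; nra. Qed.

Lemma cutset_storage_le : M <= n * n.
Proof. by have := cut (leqnn k); nra. Qed.

Lemma cutset_storage_le_repair : M <= n * (n * a - M).
Proof. by have := M_le_ka; nra. Qed.

(* The cut with [s] close to [a / 2] repaired nodes. *)
Lemma cutset_storage_sq_le : M * M <= 16 * T * (n * n) * (n * a - M).
Proof.
have Mka := M_le_ka; have aR := a_le_R; have a_pos := a0; have k0 := pos_INR k.
have n0 : 0 <= n * n by nra.
have M_le_na : M <= n * a by nra.
have MM : M * M <= n * n * (a * a) by nra.
have [aT | Ta] := Rle_lt_dec a (4 * T).
  have a_sq : a * a <= 4 * T * (n * a - M) by nra.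
  have : n * n * (a * a) <= n * n * (4 * T * (n * a - M)) by apply: Rmult_le_compat_l.
  by nra.
have [s [s_le s_gt]] := exists_nat_floor (ltac:(lra) : 0 <= a / 2).
have [sk | ks] := leqP s k.
  have cut_s := cut sk; have s_ge : a / 4 <= INR s by lra.
  have nk : 0 <= (n - INR k) * a by nra.
  have s_gap : INR s * (a / 4) <= INR s * (a - INR s - T).
    by apply: Rmult_le_compat_l; [apply: pos_INR | lra].
  have a_sq : a * a <= 16 * (n * a - M) by nra.
  have : n * n * (a * a) <= n * n * (16 * (n * a - M)) by apply: Rmult_le_compat_l.
  by nra.
have /lt_INR ks' : (k < s)%coq_nat by apply/ltP.
have cut_k := cut (leqnn k); rewrite Rminus_diag Rmult_0_l Rplus_0_l in cut_k.
have M_le_kn : M <= INR k * n by apply: Rle_trans cut_k _; apply: Rmult_le_compat_l; lra.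
have M_le_R : M <= n * a - M.
  have kn_le : INR k * n <= a / 2 * n by apply: Rmult_le_compat_r; lra.
  by nra.
have MM_le : M * M <= (INR k * n) * (n * a - M) by apply: Rmult_le_compat; lra.
have kn_le : INR k * n * (n * a - M) <= n * n * (n * a - M).
  by apply: Rmult_le_compat_r; nra.
have nnR : 0 <= n * n * (n * a - M) by apply: Rmult_le_pos; lra.
by nra.
Qed.

End CutSetConsequences.

Lemma En_bounds tau1 tau2 n p : (1 <= tau2)%N -> (tau2 <= tau1)%N -> (tau1 < n)%N ->
  En tau1 tau2 n p ->
  snd p <= 2 /\ snd p <= fst p + 1 /\
  2 * snd p <= 2 + fst p + ln (16 * INR (tau1 - tau2 + 1)) / ln (INR n).
Proof.
move=> t2_gt0 t21 t1n [a [M [ach [R0 [M0 ->]]]]] /=.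
set k := (n - tau1)%N; set T := INR (tau1 - tau2 + 1).
have T1 : 1 <= T by rewrite /T INR_addn /=; have := pos_INR (tau1 - tau2); lra.
have kTn : INR k + T <= INR n.
  by rewrite /T -INR_addn; apply: le_INR; apply/leP; rewrite /k; lia.
have kd : (k <= n - tau2)%N by rewrite /k; lia.
have dn : (n - tau2 < n)%N by lia.
have cut (s : nat) : (s <= k)%N -> M <= (INR k - INR s) * a + INR s * (INR s + T).
  move=> sk; have := achievable_cutset_bound ach kd dn (leq_subr s k).
  have -> : ((k - (k - s)) * (n - tau2 - (k - s) + 1) = s * (s + (tau1 - tau2 + 1)))%N.
    by rewrite /k; f_equal; lia.
  by rewrite INR_muln INR_addn INR_subn.
have n1 : (1 < n)%N by lia.
have lnn := ln_INR_gt0 n1.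
have n0 : 0 < INR n by apply: lt_0_INR_nat; lia.
set R := INR n * a - M in R0 cut *.
have C0 : 0 < 16 * T by lra.
have b1 := ln_le M0 (cutset_storage_le T1 kTn M0 R0 cut).
have b2 := ln_le M0 (cutset_storage_le_repair T1 kTn M0 R0 cut).
have b3 := ln_le (Rmult_lt_0_compat _ _ M0 M0) (cutset_storage_sq_le T1 kTn M0 R0 cut).
have nn0 : 0 < INR n * INR n by nra.
rewrite -/R in b2 b3; rewrite (ln_mult (INR n)) // in b1; rewrite ln_mult // in b2.
rewrite (ln_mult M) // (ln_mult (16 * T * _)) ?(ln_mult (16 * T) (_ * _)) // in b3;
  last by apply: Rmult_lt_0_compat.
rewrite (ln_mult (INR n) (INR n)) // in b3.
have divL x : x = x / ln (INR n) * ln (INR n) by field; lra.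
have := divL (ln M); have := divL (ln R); have := divL (ln (16 * T)).
move: (ln M / _) (ln R / _) (ln (16 * T) / _) => lM lR lC eC eR eM.
by split; last split; nra.
Qed.

Lemma cv_const c : Un_cv (fun _ => c) c.
Proof. by move=> eps eps0; exists 0%N => j _; rewrite /Rdist Rminus_diag Rabs_R0. Qed.

Lemma cv_halfplane (u v e : nat -> R) x y a b c :
  Un_cv u x -> Un_cv v y -> Un_cv e 0 ->
  (forall j, a * u j + b * v j <= c + e j) -> a * x + b * y <= c.
Proof.
move=> cvu cvv cve le_uv.
have cv_lhs :=
  CV_plus _ _ _ _ (CV_mult _ _ _ _ (cv_const a) cvu) (CV_mult _ _ _ _ (cv_const b) cvv).
by have := Rle_cv_lim le_uv cv_lhs (CV_plus _ _ _ _ (cv_const c) cve); rewrite Rplus_0_r.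
Qed.

Lemma cv_div_ln_unbounded (nj : nat -> nat) c :
  (forall B : nat, exists J : nat, forall j, (J <= j)%N -> (B <= nj j)%N) ->
  Un_cv (fun j => c / ln (INR (nj j))) 0.
Proof.
move=> unbounded eps eps0.
have [s [_ s_gt]] := exists_nat_floor (Rlt_le _ _ (exp_pos (Rabs c / eps))).
have [J nj_ge] := unbounded s.+1; exists J => j /leP jJ.
have lt_nj : exp (Rabs c / eps) < INR (nj j).
  by apply: Rlt_le_trans s_gt _; rewrite -S_INR; apply: le_INR; apply/leP; apply: nj_ge.
have := ln_increasing _ _ (exp_pos _) lt_nj; rewrite ln_exp => lt_ln.
have c_eps : 0 <= Rabs c / eps.
  by apply: Rmult_le_pos; [apply: Rabs_pos | apply/Rlt_le/Rinv_0_lt_compat].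
have ln0 : 0 < ln (INR (nj j)) by lra.
rewrite /Rdist Rminus_0_r Rabs_mult Rabs_inv (Rabs_right (ln _)); last lra.
apply: (Rmult_lt_reg_r (ln (INR (nj j)))) => //; rewrite Rmult_assoc Rinv_l ?Rmult_1_r; last lra.
have c_eps_eps : Rabs c / eps * eps = Rabs c by field; lra.
by nra.
Qed.

Lemma Estar_limsupE tau1 tau2 p : (1 <= tau2)%N -> (tau2 <= tau1)%N ->
  limsupE tau1 tau2 p -> Estar p.
Proof.
move=> t2_gt0 t21 [nj [x [nj_gt [x_in [unbounded [cv1 cv2]]]]]].
have bound j := En_bounds t2_gt0 t21 (nj_gt j) (x_in j).
have cv0 := cv_const 0.
have cv_err := cv_div_ln_unbounded (ln (16 * INR (tau1 - tau2 + 1))) unbounded.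
split; last split.
- suff : -1 * fst p + 1 * snd p <= 1 by lra.
  by apply: (cv_halfplane cv1 cv2 cv0) => j; have := bound j; lra.
- suff : -1 * fst p + 2 * snd p <= 2 by lra.
  by apply: (cv_halfplane cv1 cv2 cv_err) => j; have := bound j; lra.
- suff : 0 * fst p + 1 * snd p <= 2 by lra.
  by apply: (cv_halfplane cv1 cv2 cv0) => j; have := bound j; lra.
Qed.

Lemma closure2_halfplane (S : R * R -> Prop) a b c p :
  (forall q, S q -> a * fst q + b * snd q <= c) -> closure2 S p -> a * fst p + b * snd p <= c.
Proof.
move=> halfS closeS; apply: Rnot_lt_le => gap.
set g := a * fst p + b * snd p - c.
have ab0 : 0 < Rabs a + Rabs b + 1 by have := Rabs_pos a; have := Rabs_pos b; lra.
have [q [Sq [near1 near2]]] := closeS (g / (Rabs a + Rabs b + 1))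
  ltac:(apply: Rdiv_lt_0_compat; rewrite /g; lra).
set eps := g / _ in near1 near2.
have eps_g : (Rabs a + Rabs b + 1) * eps = g by rewrite /eps; field; lra.
have da : Rabs (a * (fst q - fst p)) <= Rabs a * eps.
  by rewrite Rabs_mult; apply: Rmult_le_compat_l; [apply: Rabs_pos | lra].
have db : Rabs (b * (snd q - snd p)) <= Rabs b * eps.
  by rewrite Rabs_mult; apply: Rmult_le_compat_l; [apply: Rabs_pos | lra].
have := Rle_abs (- (a * (fst q - fst p))); have := Rle_abs (- (b * (snd q - snd p))).
rewrite !Rabs_Ropp => ea eb; have := halfS q Sq; rewrite /g in eps_g.
by nra.
Qed.

Lemma Estar_closure2 (S : R * R -> Prop) p : (forall q, S q -> Estar q) ->
  closure2 S p -> Estar p.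
Proof.
move=> EstarS closeS; split; last split.
- suff : -1 * fst p + 1 * snd p <= 1 by lra.
  by apply: (closure2_halfplane _ closeS) => q /EstarS; rewrite /Estar; lra.
- suff : -1 * fst p + 2 * snd p <= 2 by lra.
  by apply: (closure2_halfplane _ closeS) => q /EstarS; rewrite /Estar; lra.
- suff : 0 * fst p + 1 * snd p <= 2 by lra.
  by apply: (closure2_halfplane _ closeS) => q /EstarS; rewrite /Estar; lra.
Qed.

Lemma achievable_of_ER_code n k d a M N Nd K : ER_code n k d N Nd K ->
  ln (INR Nd) / ln (INR K) <= a -> M <= ln (INR N) / ln (INR K) -> achievable n k d a M.
Proof. by move=> code a_ge M_le eps eps0; exists N, Nd, K; split => //; split; lra. Qed.

Lemma achievable_le n k d a M a' M' : achievable n k d a M ->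
  a <= a' -> M' <= M -> achievable n k d a' M'.
Proof.
move=> ach aa' MM' eps /ach [N [Nd [K [code [a_ge M_le]]]]].
by exists N, Nd, K; split => //; split; lra.
Qed.

Lemma ln_ratio_pow p e1 e2 : (1 < p)%N -> (0 < e2)%N ->
  ln (INR (p ^ e1)) / ln (INR (p ^ e2)) = INR e1 / INR e2.
Proof.
move=> p1 e2_gt0; have lnp := ln_INR_gt0 p1.
have p0 : 0 < INR p by apply: lt_0_INR_nat; lia.
have e20 := lt_0_INR_nat e2_gt0.
by rewrite !INR_expn !ln_pow //; field; lra.
Qed.

Lemma exists_ratio_between lo hi : 0 <= lo -> lo < hi ->
  exists v w : nat, (0 < v)%N /\ lo * INR v < INR w < hi * INR v.
Proof.
move=> lo0 lohi.
have [s [_ s_gt]] := exists_nat_floor (Rlt_le _ _ (Rinv_0_lt_compat (hi - lo) ltac:(lra))).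
have v_gap : 1 < INR s.+1 * (hi - lo).
  have := Rmult_lt_compat_r (hi - lo) _ _ ltac:(lra) s_gt.
  by rewrite Rinv_l ?S_INR; lra.
have v0 := lt_0_INR_nat (ltn0Sn s).
have [w [w_le w_gt]] := exists_nat_floor (Rmult_le_pos _ _ lo0 (Rlt_le _ _ v0)).
by exists s.+1, w.+1; split => //; rewrite (S_INR w); split; nra.
Qed.

Lemma mul_bin_pred n r : (0 < r)%N -> (n * 'C(n.-1, r.-1) = r * 'C(n, r))%N.
Proof. by move=> r0; rewrite mul_bin_diag prednK. Qed.

Lemma mul_bin_pred2 n r : (1 < r)%N -> (n * n.-1 * 'C(n.-2, r.-2) = r * r.-1 * 'C(n, r))%N.
Proof.
move=> r1; have r2 : r.-2.+1 = r.-1 by lia.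
rewrite -mulnA mul_bin_diag r2 mulnCA mul_bin_pred; last lia.
by rewrite mulnA (mulnC r.-1).
Qed.

Section LayeredRates.
Variables (n t1 t2 r : nat).
Hypotheses (t2_gt0 : (0 < t2)%N) (t21 : (t2 <= t1)%N) (t1r : (2 * t1 < r)%N) (rn : (r <= n)%N).

Let L := 'C(n, r).
Let c1 := 'C(n.-1, r.-1).
Let c2 := 'C(n.-2, r.-2).

Lemma achievable_layered_ratio v w : (0 < v)%N -> (c2 * v <= w)%N ->
  achievable n (n - t1) (n - t2) (INR (c1 * v) / INR w) (INR ((r - t1) * L * v) / INR w).
Proof.
move=> v0 c2w; have [p np p_prime] := prime_above n.
have p0 := prime_gt0 p_prime; have p1 := prime_gt1 p_prime.
have w0 : (0 < w)%N.
  by apply: leq_trans c2w; rewrite muln_gt0 v0 bin_gt0 andbT -!subn2 leq_sub2r.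
have code := LayeredCode.layered_ER_code t21 (_ : t1 < r)%N rn p_prime np.
have /prednK eNd : (0 < p ^ (c1 * v))%N by rewrite expn_gt0 p0.
have /prednK eK : (0 < p ^ w)%N by rewrite expn_gt0 p0.
have N0 : (0 < p ^ ((r - t1) * L))%N by rewrite expn_gt0 p0.
have := @ER_code_pow _ _ _ _ _ _ v (p ^ (c1 * v)).-1 (p ^ w).-1 (code ltac:(lia)) N0.
rewrite eNd eK -!expnM => /(_ (leqnn _) (leq_pexp2l p0 c2w)) pow_code.
by apply: (achievable_of_ER_code pow_code); rewrite ln_ratio_pow //; apply: Rle_refl.
Qed.

(* The admissible values of [w / v] in [achievable_layered_ratio]. *)
Lemma layered_ratio_window A B : (1 < n)%N -> 0 < A -> 0 < B ->
  4 * B * INR r < INR n * INR n -> B * INR r < A * (INR r - INR t1) ->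
  Rmax (INR c2) (INR n * INR c1 / A) < (INR r - INR t1) * INR L / B.
Proof.
move=> n1 A0 B0 small_B large_A.
have r1 : (1 < r)%N by lia.
have t1R : 2 * INR t1 + 1 <= INR r by rewrite -[2]/(INR 2) -INR_muln -S_INR; apply/le_INR/leP.
have t10 := pos_INR t1.
have n2 : 2 <= INR n by rewrite -[2]/(INR 2); apply/le_INR/leP.
have L1 : 1 <= INR L by rewrite -[1]/(INR 1); apply/le_INR/leP; rewrite bin_gt0.
have binom1 : INR n * INR c1 = INR r * INR L.
  by rewrite -!INR_muln mul_bin_pred //; lia.
have binom2 : INR n * (INR n - 1) * INR c2 = INR r * (INR r - 1) * INR L.
  have := congr1 INR (mul_bin_pred2 n r1).
  by rewrite !INR_muln !INR_pred //; lia.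
have nn1 : 0 < INR n * (INR n - 1) by nra.
apply: Rmax_lub_lt.
- apply: (Rmult_lt_reg_r (B * (INR n * (INR n - 1)))); first exact: Rmult_lt_0_compat.
  have r0 : 0 < INR r by lra.
  have r_small_B : INR r * (4 * B * INR r) < INR r * (INR n * INR n).
    exact: Rmult_lt_compat_l.
  have half_prod : INR r / 2 * (INR n * INR n / 2) <= (INR r - INR t1) * (INR n * (INR n - 1)).
    by apply: Rmult_le_compat; nra.
  have : INR r * (INR r - 1) * B < (INR r - INR t1) * (INR n * (INR n - 1)) by nra.
  have -> : (INR r - INR t1) * INR L / B * (B * (INR n * (INR n - 1))) =
    (INR r - INR t1) * (INR n * (INR n - 1)) * INR L by field; lra.
  by nra.
- apply: (Rmult_lt_reg_r (A * B)); first nra.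
  have -> : INR n * INR c1 / A * (A * B) = B * INR r * INR L by rewrite binom1; field; lra.
  have -> : (INR r - INR t1) * INR L / B * (A * B) = A * (INR r - INR t1) * INR L by field; lra.
  by apply: Rmult_lt_compat_r; lra.
Qed.

Lemma achievable_layered A B : (1 < n)%N -> 0 < A -> 0 < B ->
  4 * B * INR r < INR n * INR n -> B * INR r < A * (INR r - INR t1) ->
  achievable n (n - t1) (n - t2) (A / INR n) B.
Proof.
move=> n1 A0 B0 small_B large_A.
have := layered_ratio_window n1 A0 B0 small_B large_A.
set lo := Rmax _ _; set hi := _ / B => lo_hi.
have lo0 : 0 <= lo by apply: Rle_trans (Rmax_l _ _); apply: pos_INR.
have [v [w [v0 [lo_w w_hi]]]] := exists_ratio_between lo0 lo_hi.
have v0R := lt_0_INR_nat v0.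
have c2w : (c2 * v <= w)%N.
  apply/leP/INR_le; rewrite INR_muln; apply: Rlt_le; apply: Rle_lt_trans lo_w.
  by apply: Rmult_le_compat_r; [lra | apply: Rmax_l].
have w0 : 0 < INR w by have := pos_INR c2; have := Rmax_l (INR c2) (INR n * INR c1 / A); nra.
have n0 : 0 < INR n by apply: lt_0_INR_nat; lia.
apply: (achievable_le (achievable_layered_ratio v0 c2w)); rewrite !INR_muln ?INR_subn; try lia.
- apply: (Rmult_le_reg_r (INR w * INR n)); first nra.
  have -> : INR c1 * INR v / INR w * (INR w * INR n) = INR n * INR c1 / A * INR v * A.
    by field; lra.
  have -> : A / INR n * (INR w * INR n) = INR w * A by field; lra.
  apply: Rmult_le_compat_r; [lra | apply: Rlt_le; apply: Rle_lt_trans lo_w].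
  by apply: Rmult_le_compat_r; [lra | apply: Rmax_r].
- apply: (Rmult_le_reg_r (INR w)) => //.
  have -> : (INR r - INR t1) * INR L * INR v / INR w * INR w = hi * INR v * B.
    by rewrite /hi; field; lra.
  by rewrite (Rmult_comm B); apply: Rmult_le_compat_r; lra.
Qed.

End LayeredRates.

Lemma eventually_Rpower_gt u C : 0 < u ->
  exists N0 : nat, forall n, (N0 <= n)%N -> C < Rpower (INR n) u.
Proof.
move=> u0; set Y := Rpower (Rmax C 1) (/ u).
have Y0 : 0 < Y by apply: exp_pos.
have [s [_ s_gt]] := exists_nat_floor (Rlt_le _ _ Y0).
exists s.+1 => n sn.
have Yn : Y < INR n by apply: Rlt_le_trans s_gt _; rewrite -S_INR; apply/le_INR/leP.
have C1 : 0 < Rmax C 1 by apply: Rlt_le_trans Rlt_0_1 (Rmax_r _ _).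
have := Rlt_Rpower_l Y (INR n) u u0 (conj Y0 Yn).
rewrite /Y Rpower_mult Rinv_l ?Rpower_1 //; last lra.
by apply: Rle_lt_trans (Rmax_l _ _).
Qed.

Lemma exists_layer_exponent a b : b < a + 1 -> 2 * b < 2 + a -> b < 2 ->
  exists g, 0 < g < 1 /\ 0 < 2 - b - g /\ 0 < g + a - b.
Proof.
move=> ba1 ba2 b2; exists ((Rmax (b - a) 0 + Rmin 1 (2 - b)) / 2).
have := Rmax_l (b - a) 0; have := Rmax_r (b - a) 0.
have := Rmin_l 1 (2 - b); have := Rmin_r 1 (2 - b).
have : Rmax (b - a) 0 < Rmin 1 (2 - b) by apply: Rmax_lub_lt; apply: Rmin_glb_lt; lra.
lra.
Qed.

(* A layer size [r] close to [n ^ g] realises [n abar - Mbar = n ^ a] and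
   [Mbar = n ^ b]. *)
Lemma En_layered tau1 tau2 n a b g : (1 <= tau2)%N -> (tau2 <= tau1)%N -> (1 < n)%N ->
  0 < g < 1 -> 2 * INR tau1 + 2 < Rpower (INR n) g -> 4 < Rpower (INR n) (2 - b - g) ->
  2 * INR tau1 < Rpower (INR n) (g + a - b) -> En tau1 tau2 n (a, b).
Proof.
move=> t2_gt0 t21 n1 [g0 g1]; set P := Rpower (INR n) => Pg P2bg Pgab.
have t1R := pos_INR tau1.
have n2 : 2 <= INR n by rewrite -[2]/(INR 2); apply/le_INR/leP.
have Ppos x : 0 < P x by apply: exp_pos.
have P_add x y : P (x + y) = P x * P y by apply: Rpower_plus.
have Pa := Ppos a; have Pb := Ppos b; have Pg0 := Ppos g.
have [r [r_le r_gt]] := exists_nat_floor (Rlt_le _ _ Pg0).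
exists ((P a + P b) / INR n), (P b).
have -> : INR n * ((P a + P b) / INR n) - P b = P a by field; lra.
split; last split; [| exact: Pa | split; first exact: Pb].
- apply: (achievable_layered (r := r)) => //; try lra.
  + by apply/ltP/INR_lt; rewrite INR_muln /=; lra.
  + apply/leP/INR_le; apply: Rle_trans r_le _.
    rewrite -[X in _ <= X](Rpower_1 (INR n)); last lra.
    by apply: Rle_Rpower; lra.
  + have P2 : P 2 = INR n * INR n by rewrite /P -[2]/(INR 2) Rpower_pow /=; [ring | lra].
    have -> : INR n * INR n = P b * P g * P (2 - b - g).
      by rewrite -P2 -!P_add; congr P; ring.
    have r_Pg : 4 * P b * INR r <= 4 * P b * P g by apply: Rmult_le_compat_l; lra.
    have := Rmult_lt_0_compat _ _ Pb Pg0.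
    by nra.
  + have Pga : P g * P a = P b * P (g + a - b) by rewrite -!P_add; congr P; ring.
    have r_a : P g / 2 * P a <= (INR r - INR tau1) * P a by apply: Rmult_le_compat_r; lra.
    have t1_b : INR tau1 * P b < P g * P a / 2 by rewrite Pga; nra.
    by nra.
- have lnn := ln_INR_gt0 n1.
  by rewrite /P !ln_Rpower; congr pair; field; lra.
Qed.

Lemma En_eventually tau1 tau2 a b : (1 <= tau2)%N -> (tau2 <= tau1)%N ->
  b < a + 1 -> 2 * b < 2 + a -> b < 2 ->
  exists N0 : nat, forall n, (N0 <= n)%N -> (tau1 < n)%N /\ En tau1 tau2 n (a, b).
Proof.
move=> t2_gt0 t21 ba1 ba2 b2.
have [g [g01 [bg0 gab0]]] := exists_layer_exponent ba1 ba2 b2.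
have [N1 P_g] := eventually_Rpower_gt (2 * INR tau1 + 2) (proj1 g01).
have [N2 P_2bg] := eventually_Rpower_gt 4 bg0.
have [N3 P_gab] := eventually_Rpower_gt (2 * INR tau1) gab0.
exists (maxn (maxn N1 N2) (maxn N3 (maxn tau1.+1 2))).
move=> n; rewrite !geq_max => /andP [/andP [n1 n2] /and3P [n3 t1n n_gt1]].
by split => //; apply: En_layered (P_g n n1) (P_2bg n n2) (P_gab n n3).
Qed.

Lemma limsupE_of_eventually tau1 tau2 q :
  (exists N0 : nat, forall n, (N0 <= n)%N -> (tau1 < n)%N /\ En tau1 tau2 n q) ->
  limsupE tau1 tau2 q.
Proof.
move=> [N0 ev]; exists (fun j => (N0 + j)%N), (fun _ => q).
split; [|split; [|split; [|split]]]; try exact: cv_const.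
- by move=> j; case: (ev _ (leq_addr j N0)).
- by move=> j; case: (ev _ (leq_addr j N0)).
- by move=> B; exists B => j Bj; apply: leq_trans Bj (leq_addl _ _).
Qed.

Lemma closure2_limsupE_of_Estar tau1 tau2 p : (1 <= tau2)%N -> (tau2 <= tau1)%N ->
  Estar p -> closure2 (limsupE tau1 tau2) p.
Proof.
move=> t2_gt0 t21 [E1 [E2 E3]] eps eps0.
exists (fst p, snd p - eps / 2); split.
  by apply: limsupE_of_eventually; apply: En_eventually => //=; lra.
rewrite /= Rminus_diag Rabs_R0 (_ : _ - snd p = - (eps / 2)); last ring.
by rewrite Rabs_Ropp Rabs_right; lra.
Qed.

Theorem mainTheorem1 (tau1 tau2 : nat) :
  leq 1 tau2 -> leq tau2 tau1 ->
  forall p : R * R, Estar p <-> closure2 (limsupE tau1 tau2) p.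
Proof.
move=> t2_gt0 t21 p; split; first exact: closure2_limsupE_of_Estar.
by apply: Estar_closure2 => q; apply: Estar_limsupE.
Qed.
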